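(* Let $k$ be a commutative Noetherian ring and let $R$ be a reduced commutative $k$-algebra that is finitely generated as a $k$-module. Then $\mathrm{Aut}_{k\text{-alg}}(R)$ is a finite group.
   Context: Reduced means no nonzero nilpotent elements. *)

From HB Require Import structures.
From mathcomp Require Import all_boot all_order all_algebra.
Set Implicit Arguments. Unset Strict Implicit. Unset Printing Implicit Defensive.
Import GRing.Theory.
Local Open Scope ring_scope.

Definition is_ideal (k : comPzRingType) (I : k -> Prop) : Prop :=
  [/\ I 0,
      (forall x y, I x -> I y -> I (x + y)) &
      (forall a x, I x -> I (a * x))].

Definition fg_ideal (k : comPzRingType) (I : k -> Prop) : Prop :=
  exists s : seq k, forall x,
    I x <-> exists c : 'I_(size s) -> k, x = \sum_(i < size s) c i * s`_i.

Definition noetherian (k : comPzRingType) : Prop :=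
  forall I : k -> Prop, is_ideal I -> fg_ideal I.

Definition reduced (R : pzRingType) : Prop :=
  forall (x : R) (n : nat), x ^+ n = 0 -> x = 0.

Definition fg_module (k : pzRingType) (V : lmodType k) : Prop :=
  exists s : seq V, forall v : V,
    exists c : 'I_(size s) -> k, v = \sum_(i < size s) c i *: s`_i.

Definition kalg_aut (k : pzRingType) (R : algType k) (f : R -> R) : Prop :=
  [/\ (forall x y, f (x + y) = f x + f y),
      (forall (a : k) x, f (a *: x) = a *: f x),
      (forall x y, f (x * y) = f x * f y),
      f 1 = 1 &
      bijective f].

(* The group Aut_{k-alg}(R) is finite: there is a finite list of maps
   containing (up to extensional equality) every k-algebra automorphism. *)
Definition finite_kalg_aut (k : pzRingType) (R : algType k) : Prop :=
  exists s : seq (R -> R), forall f : R -> R,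
    kalg_aut f -> exists i : 'I_(size s), f =1 nth id s i.

From HB Require Import structures.
From mathcomp Require Import all_boot all_order all_algebra.
From Stdlib Require Import Classical ClassicalEpsilon.
From mathcomp Require Import zify.
Set Implicit Arguments. Unset Strict Implicit. Unset Printing Implicit Defensive.
Import GRing.Theory.
Local Open Scope ring_scope.

(* Write R = k s_1 + ... + k s_m.  Since R is a finite module over a Noetherian
   ring, its ideals satisfy ACC, so Noetherian induction on radical ideals J
   applies: a monic polynomial q has only finitely many roots modulo J.  If J
   is prime this is the bound by the degree over the domain R/J; otherwise
   J = rad(J + aR) /\ rad(J + bR) with ab in J, and the two strictly larger
   radical ideals are handled by induction.  For J = 0 (R is reduced), q has
   finitely many roots.  By the determinant trick, every k-algebra
   automorphism sends s_j to a root of the characteristic polynomial of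
   multiplication by s_j, so it is one of finitely many maps. *)

Definition ascending T (C : nat -> T -> Prop) := forall n x, C n x -> C n.+1 x.

Definition stationary T (C : nat -> T -> Prop) :=
  exists N, forall n x, C n x -> C N x.

Lemma ascending_le T (C : nat -> T -> Prop) : ascending C ->
  forall n m, (n <= m)%N -> forall x, C n x -> C m x.
Proof.
move=> Cup n m /subnK <-; elim: (m - n)%N => [//|d IH] x Cx.
by rewrite addSn; apply/Cup/IH.
Qed.

Lemma ascending_bound T (C : nat -> T -> Prop) : ascending C ->
  forall m (x : 'I_m -> T), (forall i, exists n, C n (x i)) ->
  exists N, forall i, C N (x i).
Proof.
move=> Cup; elim=> [|m IH] x Cx; first by exists 0%N; case.
have [N1 HN1] := IH (fun i => x (lift ord0 i)) (fun i => Cx _).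
have [N2 HN2] := Cx ord0.
exists (maxn N1 N2) => i; case: (unliftP ord0 i) => [j ->|->].
- by apply: (ascending_le Cup (leq_maxl N1 N2)); apply: HN1.
- exact: (ascending_le Cup (leq_maxr N1 N2) HN2).
Qed.

Definition span (k : pzRingType) (V : lmodType k) (l : seq V) (v : V) :=
  exists c : 'I_(size l) -> k, v = \sum_(i < size l) c i *: l`_i.

Definition submodule (k : pzRingType) (V : lmodType k) (N : V -> Prop) :=
  [/\ N 0, forall x y, N x -> N y -> N (x + y) & forall a x, N x -> N (a *: x)].

Lemma submoduleB (k : pzRingType) (V : lmodType k) (N : V -> Prop) :
  submodule N -> forall x y, N x -> N y -> N (x - y).
Proof. by case=> _ ND NZ x y Nx Ny; rewrite -scaleN1r; apply/ND/NZ. Qed.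

Lemma submodule_span (k : pzRingType) (V : lmodType k) (l : seq V) :
  submodule (span l).
Proof.
split.
- by exists (fun _ => 0); rewrite big1 // => i _; rewrite scale0r.
- move=> x y [c ->] [c' ->]; exists (fun i => c i + c' i).
  by rewrite -big_split; apply: eq_bigr => i _; rewrite scalerDl.
- move=> a x [c ->]; exists (fun i => a * c i).
  by rewrite scaler_sumr; apply: eq_bigr => i _; rewrite scalerA.
Qed.

Section NoetherianChains.
Variable k : comPzRingType.
Hypothesis k_noeth : noetherian k.

Lemma noetherian_ideal_stationary (C : nat -> k -> Prop) :
  (forall n, is_ideal (C n)) -> ascending C -> stationary C.
Proof.
move=> Cideal Cup; pose U x := exists n, C n x.
have Uideal : is_ideal U.
  split.
  - by exists 0%N; case: (Cideal 0%N).
  - move=> x y [n Cx] [m Cy]; exists (maxn n m).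
    case: (Cideal (maxn n m)) => _ CD _; apply: CD.
    + exact: (ascending_le Cup (leq_maxl n m) Cx).
    + exact: (ascending_le Cup (leq_maxr n m) Cy).
  - by move=> a x [n Cx]; exists n; case: (Cideal n) => _ _ CM; apply: CM.
have [s Us] := k_noeth Uideal.
have [N CNs] : exists N, forall i : 'I_(size s), C N s`_i.
  apply: (ascending_bound Cup) => i; apply/Us.
  exists (fun j => (j == i)%:R).
  rewrite (bigD1 i) //= eqxx mul1r big1 ?addr0 // => j /negbTE ->.
  by rewrite mul0r.
exists N => n x Cx; have /Us [c ->] : U x by exists n.
case: (Cideal N) => C0 CD CM; apply: (big_ind (C N)) => // i _; exact: CM.
Qed.

(* Induction on l: the leading coefficients along the first vector of a :: l
   form a chain of ideals of k, and the elements of the chain lying in the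
   span of l form a chain handled by the induction hypothesis. *)
Lemma noetherian_span_stationary (V : lmodType k) (l : seq V)
    (C : nat -> V -> Prop) :
  (forall n, submodule (C n)) -> ascending C ->
  (forall n x, C n x -> span l x) -> stationary C.
Proof.
elim: l C => [|a l IH] C Csub Cup Cl.
  exists 0%N => n x /Cl [c ->]; rewrite big_ord0; by case: (Csub 0%N).
pose I n (c : k) := exists2 w, span l w & C n (c *: a + w).
have Iideal n : is_ideal (I n).
  case: (Csub n) => C0 CD CZ; case: (submodule_span l) => S0 SD SZ; split.
  - by exists 0; rewrite // scale0r addr0.
  - move=> x y [w Sw Cw] [w' Sw' Cw']; exists (w + w'); first exact: SD.
    by rewrite scalerDl addrACA; apply: CD.
  - move=> b x [w Sw Cw]; exists (b *: w); first exact: SZ.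
    by rewrite -scalerA -scalerDr; apply: CZ.
have [N1 HN1] := noetherian_ideal_stationary Iideal
  (fun n x '(ex_intro2 w Sw Cw) => ex_intro2 _ _ w Sw (Cup _ _ Cw)).
pose D n v := C n v /\ span l v.
have Dsub n : submodule (D n).
  case: (Csub n) => C0 CD CZ; case: (submodule_span l) => S0 SD SZ; split.
  - by [].
  - by move=> x y [? ?] [? ?]; split; [apply: CD | apply: SD].
  - by move=> b x [? ?]; split; [apply: CZ | apply: SZ].
have [N2 HN2] := IH D Dsub (fun n x Dx => conj (Cup _ _ Dx.1) Dx.2)
  (fun n x Dx => Dx.2).
pose M := maxn N1 N2; exists M => n v Cv.
have [c vE] := Cl _ _ Cv; rewrite big_ord_recl /= in vE.
set w := \sum_(i < size l) _ in vE.
have Sw : span l w by exists (fun i => c (lift ord0 i)).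
have Icv : I n (c ord0) by exists w; rewrite // -vE.
have [w' Sw' Cv'] := HN1 n (c ord0) Icv.
set v' := _ + w' in Cv'.
have CMv' : C M v' := ascending_le Cup (leq_maxl N1 N2) Cv'.
have Dvv' : D (maxn n M) (v - v').
  split.
  - apply: submoduleB (Csub _) _ _ _ _.
    + exact: (ascending_le Cup (leq_maxl n M) Cv).
    + exact: (ascending_le Cup (leq_maxr n M) CMv').
  - have -> : v - v' = w - w' by rewrite vE opprD addrACA subrr add0r.
    exact: submoduleB (submodule_span l) _ _ Sw Sw'.
rewrite -(subrK v' v); case: (Csub M) => _ CD _; apply: CD => //.
exact: (ascending_le Cup (leq_maxr N1 N2) (HN2 _ _ Dvv').1).
Qed.

End NoetherianChains.

Lemma ideal_submodule (k : pzRingType) (R : comAlgType k) (J : R -> Prop) :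
  is_ideal J -> submodule J.
Proof.
by case=> J0 JD JM; split=> // a x Jx; rewrite -[x]mul1r scalerAl; apply: JM.
Qed.

(* Noetherian induction on the ideals of a finite algebra over a Noetherian
   ring: a strictly ascending chain of counterexamples would contradict
   noetherian_span_stationary. *)
Lemma noetherian_ideal_ind (k : comPzRingType) (R : comAlgType k)
    (P : (R -> Prop) -> Prop) :
  noetherian k -> fg_module R ->
  (forall J, is_ideal J ->
     (forall J', is_ideal J' -> (forall x, J x -> J' x) ->
        (exists x, J' x /\ ~ J x) -> P J') -> P J) ->
  forall J, is_ideal J -> P J.
Proof.
move=> k_noeth [s Rs] IHP J0 J0ideal; apply: NNPP => notPJ0.
pose T := {J : R -> Prop | is_ideal J /\ ~ P J}.
have step (t : T) : exists t' : T, (forall x, sval t x -> sval t' x) /\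
    exists x, sval t' x /\ ~ sval t x.
  case: t => J [Jideal notPJ]; apply: NNPP => nostep; apply: (notPJ).
  apply: IHP => // J' J'ideal JJ' J'J; apply: NNPP => notPJ'.
  by apply: nostep; exists (exist _ J' (conj J'ideal notPJ')).
pose g t := proj1_sig (constructive_indefinite_description _ (step t)).
have gP t : (forall x, sval t x -> sval (g t) x) /\
    exists x, sval (g t) x /\ ~ sval t x.
  exact: proj2_sig (constructive_indefinite_description _ (step t)).
pose t0 : T := exist _ J0 (conj J0ideal notPJ0).
pose C n := sval (iter n g t0).
have [N CN] : stationary C.
  apply: (noetherian_span_stationary k_noeth (l := s)).
  - by move=> n; apply: ideal_submodule; case: (svalP (iter n g t0)).
  - by move=> n x; rewrite /C iterS; apply: (gP _).1.
  - by move=> n x _; apply: Rs.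
have [_ [x [CSx notCx]]] := gP (iter N g t0).
exact/notCx/(CN N.+1).
Qed.

Section IdealsOfCommutativeRings.
Variable R : comNzRingType.
Implicit Types (I J : R -> Prop) (a b x y : R).

Definition radical J := forall x n, J (x ^+ n) -> J x.

Definition radical_of I x := exists n, I (x ^+ n).

Definition adjoin J a x := exists y c, J y /\ x = y + c * a.

Lemma idealB J : is_ideal J -> forall x y, J x -> J y -> J (x - y).
Proof. by case=> _ JD JM x y Jx Jy; rewrite -mulN1r; apply/JD/JM. Qed.

Lemma idealMr J : is_ideal J -> forall x a, J x -> J (x * a).
Proof. by case=> _ _ JM x a Jx; rewrite mulrC; apply: JM. Qed.

Lemma ideal_adjoin J a : is_ideal J -> is_ideal (adjoin J a).
Proof.
case=> J0 JD JM; split.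
- by exists 0, 0; rewrite mul0r addr0.
- move=> _ _ [y [c [Jy ->]]] [y' [c' [Jy' ->]]].
  by exists (y + y'), (c + c'); rewrite mulrDl addrACA; split; first apply: JD.
- move=> b _ [y [c [Jy ->]]].
  by exists (b * y), (b * c); rewrite mulrDr mulrA; split; first apply: JM.
Qed.

Lemma adjoin_sub J a x : J x -> adjoin J a x.
Proof. by move=> Jx; exists x, 0; rewrite mul0r addr0. Qed.

Lemma adjoin_self J a : is_ideal J -> adjoin J a a.
Proof. by case=> J0 _ _; exists 0, 1; rewrite mul1r add0r. Qed.

(* In the binomial expansion of (x + y)^(n + m) every term is divisible
   by x^n or by y^m. *)
Lemma ideal_exprD I x y n m : is_ideal I ->
  I (x ^+ n) -> I (y ^+ m) -> I ((x + y) ^+ (n + m)).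
Proof.
move=> Iideal Ix Iy; rewrite exprDn; case: (Iideal) => I0 ID IM.
apply: (big_ind I) => // i _; rewrite -mulr_natr; apply: idealMr => //.
case: (ltnP i m) => lt_im.
- have -> : x ^+ (n + m - i) = x ^+ (n + m - i - n) * x ^+ n.
    by rewrite -exprD subnK //; lia.
  by rewrite -mulrA; apply: IM; apply: idealMr.
- have -> : y ^+ i = y ^+ (i - m) * y ^+ m by rewrite -exprD subnK.
  by rewrite mulrA; apply: IM.
Qed.

Lemma ideal_radical_of I : is_ideal I -> is_ideal (radical_of I).
Proof.
move=> Iideal; case: (Iideal) => I0 ID IM; split.
- by exists 1%N; rewrite expr1.
- by move=> x y [n Ix] [m Iy]; exists (n + m)%N; apply: ideal_exprD.
- by move=> a x [n Ix]; exists n; rewrite exprMn; apply: IM.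
Qed.

Lemma radical_of_sub I x : I x -> radical_of I x.
Proof. by exists 1%N; rewrite expr1. Qed.

Lemma radical_radical_of I : radical (radical_of I).
Proof. by move=> x m [n Ix]; exists (m * n)%N; rewrite exprM. Qed.

Lemma radical_adjoin_cap J a b x : is_ideal J -> radical J -> J (a * b) ->
  radical_of (adjoin J a) x -> radical_of (adjoin J b) x -> J x.
Proof.
move=> Jideal Jrad Jab [n [y [c [Jy xn]]]] [m [y' [c' [Jy' xm]]]].
case: (Jideal) => J0 JD JM; apply: (Jrad x (n + m)%N).
rewrite exprD xn xm mulrDl; apply: (JD); first exact: idealMr.
by rewrite mulrDr; apply: JD; [apply: (JM) | rewrite mulrACA; apply: JM].
Qed.

Definition roots_finite_mod J (q : {poly R}) :=
  exists L : seq R, forall r, J q.[r] -> exists2 l, l \in L & J (r - l).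

(* Over the domain R/J, factor out a root r0 of q - q(r0) and recurse. *)
Lemma prime_roots_finite_mod J : is_ideal J -> ~ J 1 ->
  (forall a b, J (a * b) -> J a \/ J b) ->
  forall q : {poly R}, q \is monic -> roots_finite_mod J q.
Proof.
move=> Jideal notJ1 Jprime q qmon.
have [n qsz] : exists n, size q = n.+1.
  by exists (size q).-1; rewrite prednK // size_poly_gt0 monic_neq0.
elim: n q qmon qsz => [|n IH] q qmon qsz.
  move/eqP: qsz => /size_poly1P [c _ qE].
  have c1 := monicP qmon; rewrite qE lead_coefC in c1.
  by exists [::] => r; rewrite qE hornerC c1 => /notJ1.
case: (classic (exists r0, J q.[r0])) => [[r0 Jr0] | noroot]; last first.
  by exists [::] => r Jr; case: noroot; exists r.
have : root (q - q.[r0]%:P) r0 by rewrite /root hornerD hornerN hornerC subrr.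
case/factor_theorem => q' qE.
have szC : (size (- q.[r0]%:P) < size q)%N.
  by rewrite size_opp qsz (leq_ltn_trans (size_polyC_leq1 _)).
have qq'sz : size (q - q.[r0]%:P) = n.+2 by rewrite size_addl // qsz.
have q'0 : q' != 0.
  by apply: contra_eq_neq qq'sz => q'0; rewrite qE q'0 mul0r size_poly0.
have q'mon : q' \is monic.
  apply/monicP; rewrite -(lead_coef_Mmonic q' (monicXsubC r0)) -qE.
  by rewrite lead_coefDl // (monicP qmon).
have q'sz : size q' = n.+1.
  by move: qq'sz; rewrite qE size_Mmonic ?monicXsubC // size_XsubC addn2 => -[].
have [L HL] := IH q' q'mon q'sz.
exists (r0 :: L) => r Jr.
have : J (q'.[r] * (r - r0)).
  move/(congr1 (horner^~ r)): qE; rewrite hornerM hornerXsubC.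
  by rewrite hornerD hornerN hornerC => <-; apply: idealB.
case/Jprime => [/HL [l Ll Jrl] | Jrr0].
- by exists l => //; rewrite inE Ll orbT.
- by exists r0 => //; rewrite inE eqxx.
Qed.

(* Choosing, for each pair of residues modulo the two larger ideals, one root
   of q in that pair of classes gives residues modulo J. *)
Lemma roots_finite_mod_cap J a b (q : {poly R}) :
  is_ideal J -> radical J -> J (a * b) ->
  roots_finite_mod (radical_of (adjoin J a)) q ->
  roots_finite_mod (radical_of (adjoin J b)) q -> roots_finite_mod J q.
Proof.
move=> Jideal Jrad Jab [L1 HL1] [L2 HL2].
pose Ja := radical_of (adjoin J a); pose Jb := radical_of (adjoin J b).
have Jaideal : is_ideal Ja by apply/ideal_radical_of/ideal_adjoin.
have Jbideal : is_ideal Jb by apply/ideal_radical_of/ideal_adjoin.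
have JJa y : J y -> Ja y by move/(adjoin_sub a)/radical_of_sub.
have JJb y : J y -> Jb y by move/(adjoin_sub b)/radical_of_sub.
pose h (p : R * R) : R :=
  match excluded_middle_informative
    (exists r, J q.[r] /\ Ja (r - p.1) /\ Jb (r - p.2)) with
  | left ex_r => proj1_sig (constructive_indefinite_description _ ex_r)
  | right _ => 0
  end.
exists [seq h p | p <- [seq (x, y) | x <- L1, y <- L2]] => r Jr.
have [l1 L1l1 Jarl1] := HL1 r (JJa _ Jr).
have [l2 L2l2 Jbrl2] := HL2 r (JJb _ Jr).
exists (h (l1, l2)); first by apply/map_f/allpairs_f.
rewrite /h; case: excluded_middle_informative => [ex_r | no_r]; last first.
  by case: no_r; exists r.
case: constructive_indefinite_description => r' /= [_ [Jar' Jbr']].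
apply: (radical_adjoin_cap Jideal Jrad Jab).
- have -> : r - r' = (r - l1) - (r' - l1) by rewrite opprB addrA subrK.
  exact: idealB Jaideal _ _ Jarl1 Jar'.
- have -> : r - r' = (r - l2) - (r' - l2) by rewrite opprB addrA subrK.
  exact: idealB Jbideal _ _ Jbrl2 Jbr'.
Qed.

End IdealsOfCommutativeRings.

Lemma radical_roots_finite_mod (k : comPzRingType) (R : comAlgType k)
    (q : {poly R}) :
  noetherian k -> fg_module R -> q \is monic ->
  forall J, is_ideal J -> radical J -> roots_finite_mod J q.
Proof.
move=> k_noeth R_fg qmon.
apply: (noetherian_ideal_ind (P := fun J => radical J -> roots_finite_mod J q))
  => // J Jideal IH Jrad.
case: (classic (J 1)) => [J1 | notJ1].
  exists [:: 0] => r _; exists 0; first by rewrite inE.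
  by rewrite subr0 -[r]mul1r; apply: idealMr.
case: (classic (forall a b, J (a * b) -> J a \/ J b)) => [Jprime | notprime].
  exact: prime_roots_finite_mod.
have [a [b [Jab [notJa notJb]]]] : exists a b, J (a * b) /\ ~ J a /\ ~ J b.
  apply: NNPP => none; apply: notprime => a b Jab.
  case: (classic (J a)) => [|notJa]; [by left | right].
  by apply: NNPP => notJb; apply: none; exists a, b.
have larger c : ~ J c -> roots_finite_mod (radical_of (adjoin J c)) q.
  move=> notJc; apply: IH; last exact: radical_radical_of.
  - exact/ideal_radical_of/ideal_adjoin.
  - by move=> y /(adjoin_sub c)/radical_of_sub.
  - by exists c; split=> //; apply/radical_of_sub/adjoin_self.
exact: roots_finite_mod_cap Jideal Jrad Jab (larger a notJa) (larger b notJb).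
Qed.

Lemma reduced_roots_finite (k : comPzRingType) (R : comAlgType k)
    (q : {poly R}) :
  noetherian k -> reduced R -> fg_module R -> q \is monic ->
  exists L : seq R, forall r, root q r -> r \in L.
Proof.
move=> k_noeth Rred R_fg qmon.
have zero_ideal : is_ideal (fun x : R => x = 0).
  by split=> // [x y -> ->|a x ->]; rewrite ?addr0 ?mulr0.
have [|L HL] := radical_roots_finite_mod k_noeth R_fg qmon zero_ideal.
  by move=> x n /Rred.
by exists L => r /eqP /HL [l Ll /eqP]; rewrite subr_eq0 => /eqP ->.
Qed.

(* Cayley-Hamilton in the form of the determinant trick: the vector of the t i
   is killed by x - A, hence by det (x - A), and 1 is a combination of them. *)
Lemma determinant_trick (k : pzRingType) (R : comAlgType k) m (A : 'M[k]_m)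
    (d : 'I_m -> k) (t : 'I_m -> R) (x : R) :
  (forall i, x * t i = \sum_l A i l *: t l) -> 1 = \sum_i d i *: t i ->
  (char_poly (map_mx (in_alg R) A)).[x] = 0.
Proof.
move=> xt d1; set A' := map_mx _ A; pose B := x%:M - A'; pose T := \col_i t i.
have BT0 : B *m T = 0.
  apply/matrixP => i j; rewrite mulmxBl mul_scalar_mx !mxE xt.
  apply/eqP; rewrite subr_eq0; apply/eqP/eq_bigr => l _.
  by rewrite !mxE mulr_algl.
have detBt i : \det B * t i = 0.
  have : \det B *: T = 0.
    by rewrite -mul_scalar_mx -mul_adj_mx -mulmxA BT0 mulmx0.
  by move/matrixP => /(_ i 0); rewrite !mxE.
have detB0 : \det B = 0.
  rewrite -(mulr1 (\det B)) d1 mulr_sumr big1 // => i _.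
  by rewrite -scalerAr detBt scaler0.
rewrite -detB0 /char_poly -[_.[x]]/(horner_eval x _) -det_map_mx.
congr (\det _); apply/matrixP => i j.
by rewrite !mxE /= horner_evalE !hornerE hornerMn hornerX.
Qed.

Lemma kalg_aut_sum (k : pzRingType) (R : algType k) (f : R -> R) m
    (c : 'I_m -> k) (v : 'I_m -> R) :
  kalg_aut f -> f (\sum_(i < m) c i *: v i) = \sum_(i < m) c i *: f (v i).
Proof.
case=> fD fZ _ _ _.
have f0 : f 0 = 0 by apply: (@addrI _ (f 0)); rewrite -fD !addr0.
by rewrite (big_morph f fD f0); apply: eq_bigr => i _; apply: fZ.
Qed.

Lemma finite_kalg_aut_of_gen (k : pzRingType) (R : algType k) (s L : seq R) :
  (forall v, span s v) ->
  (forall f (i : 'I_(size s)), kalg_aut f -> f s`_i \in L) ->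
  finite_kalg_aut R.
Proof.
move=> Rs fL.
pose coef v := proj1_sig (constructive_indefinite_description _ (Rs v)).
have coefE v : v = \sum_(i < size s) coef v i *: s`_i.
  exact: proj2_sig (constructive_indefinite_description _ (Rs v)).
pose F := {ffun 'I_(size s) -> 'I_(size L)}.
pose mk (g : F) v := \sum_(i < size s) coef v i *: L`_(g i).
exists [seq mk g | g <- enum F] => f faut.
have idxL (i : 'I_(size s)) : leq (index (f s`_i) L).+1 (size L).
  by rewrite index_mem; apply: fL.
pose g : F := [ffun i => Ordinal (idxL i)].
have gF : (index g (enum F) < size [seq mk g | g <- enum F])%N.
  by rewrite size_map index_mem mem_enum.
exists (Ordinal gF) => v /=.
rewrite (nth_map g) ?index_mem ?mem_enum // nth_index ?mem_enum //.
rewrite /mk {1}(coefE v) (kalg_aut_sum _ _ faut); apply: eq_bigr => i _.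
by rewrite ffunE /= nth_index //; apply: fL.
Qed.

Theorem mainTheorem17 (k : comPzRingType) (R : comAlgType k) :
  noetherian k -> reduced R -> fg_module R -> finite_kalg_aut R.
Proof.
move=> k_noeth Rred R_fg; have [s Rs] := R_fg; pose m := size s.
have [c cE] := fin_all_exists (fun ji : 'I_m * 'I_m => Rs (s`_ji.1 * s`_ji.2)).
have [d dE] := Rs 1.
pose A j := \matrix_(i, l) c (j, i) l.
have [L LE] := fin_all_exists (fun j => reduced_roots_finite k_noeth Rred R_fg
  (char_poly_monic (map_mx (in_alg R) (A j)))).
apply: (finite_kalg_aut_of_gen (L := flatten [seq L j | j <- enum 'I_m]) Rs).
move=> f j faut; apply/flatten_mapP; exists j; first by rewrite mem_enum.
have [_ _ fM f1 _] := faut.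
apply/LE/eqP/(determinant_trick (d := d) (t := fun i => f s`_i)) => [i|].
- rewrite -fM (cE (j, i)) (kalg_aut_sum _ _ faut).
  by apply: eq_bigr => l _; rewrite mxE.
- by rewrite -f1 {1}dE (kalg_aut_sum _ _ faut).
Qed.
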